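(* For every nonempty graph $G$ and all integers $s,t\ge 1$, \[\hat r((s+t)K_2,G)\le \hat r(sK_2,G)+\hat r(tK_2,G).\]
   Context: All graphs are finite and simple; a graph is nonempty if it has at least one edge. $tK_2$ denotes a matching with $t$ edges (disjoint union of $t$ copies of $K_2$). For graphs $F,G,H$, $F\to(G,H)$ means every red--blue coloring of $E(F)$ contains a red copy of $G$ or a blue copy of $H$, and $\hat r(G,H)=\min\{|E(F)|:F\to(G,H)\}$. *)

From mathcomp Require Import all_boot.
From Stdlib Require ClassicalEpsilon.
Set Implicit Arguments. Unset Strict Implicit. Unset Printing Implicit Defensive.

Record sgraph := SGraph {
  vert : finType;
  adj : rel vert;
  adj_sym : symmetric adj;
  adj_irr : irreflexive adj }.

Definition nedges (F : sgraph) : nat :=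
  (#|[set p : vert F * vert F | adj p.1 p.2]|)./2.

Definition nonempty_graph (G : sgraph) : Prop :=
  exists x y : vert G, adj x y.

(* the matching tK_2 : vertices (i, b) with i < t, b : bool; edges (i,false)-(i,true) *)
Definition matching_adj (t : nat) : rel ('I_t * bool) :=
  fun p q => (p.1 == q.1) && (p.2 != q.2).
Arguments matching_adj t : clear implicits.

Lemma matching_adj_sym (n : nat) : symmetric (matching_adj n).
Proof. by move=> [i a] [j b]; rewrite /matching_adj /= eq_sym [b == a]eq_sym. Qed.

Lemma matching_adj_irr (n : nat) : irreflexive (matching_adj n).
Proof. by move=> [i a]; rewrite /matching_adj /= !eqxx. Qed.

Definition matching (t : nat) : sgraph :=
  @SGraph ('I_t * bool)%type (matching_adj t)
          (@matching_adj_sym t) (@matching_adj_irr t).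

Definition has_copy (F G : sgraph) (col : vert F -> vert F -> bool) : Prop :=
  exists f : vert G -> vert F, injective f /\
    forall x y : vert G, adj x y -> adj (f x) (f y) && col (f x) (f y).

(* F -> (G, H): every red/blue colouring of E(F) (c x y = true means red;
   c symmetric so that it is a colouring of the edges) has a red G or a blue H. *)
Definition arrows (F G H : sgraph) : Prop :=
  forall c : rel (vert F), symmetric c ->
    has_copy G c \/ has_copy H (fun x y => ~~ c x y).

Definition size_ramsey_cand (G H : sgraph) (m : nat) : Prop :=
  exists F : sgraph, nedges F = m /\ arrows F G H.

Definition size_ramsey (G H : sgraph) : nat :=
  ClassicalEpsilon.epsilon (inhabits 0%N) (fun m => size_ramsey_cand G H m /\
                             forall k, size_ramsey_cand G H k -> m <= k).

(* A disjoint union F1 + F2 with F1 -> (sK2, G) and F2 -> (tK2, G) arrows ((s+t)K2, G): a colouring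
   with no blue G restricts to colourings of F1 and F2 without blue G, hence with a red sK2 in F1
   and a red tK2 in F2, which together form a red (s+t)K2.  Taking F1, F2 of minimum size gives the
   bound, since F1 + F2 has e(F1) + e(F2) edges.  Such F1, F2 exist because G -> (K2, G), so the
   disjoint union of s copies of G arrows (sK2, G). *)

From mathcomp Require Import all_boot.
From Stdlib Require Classical_Prop Wf_nat.
Set Implicit Arguments. Unset Strict Implicit. Unset Printing Implicit Defensive.

Lemma ex_minn_prop (P : nat -> Prop) :
  (exists n, P n) -> exists m, P m /\ forall k, P k -> m <= k.
Proof.
move=> exP.
have [m [[Pm minm] _]] := @Wf_nat.dec_inh_nat_subset_has_unique_least_element P
  (fun n => Classical_Prop.classic (P n)) exP.
by exists m; split=> // k /minm /leP.
Qed.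

Lemma size_ramseyP (G H : sgraph) :
  (exists k, size_ramsey_cand G H k) ->
  size_ramsey_cand G H (size_ramsey G H) /\
  forall k, size_ramsey_cand G H k -> size_ramsey G H <= k.
Proof.
by move=> /ex_minn_prop/(ClassicalEpsilon.epsilon_spec (inhabits 0)).
Qed.

Section DisjointUnion.
Variables F1 F2 : sgraph.

Definition union_adj : rel (vert F1 + vert F2)%type := fun u v =>
  match u, v with
  | inl x, inl y => adj x y
  | inr x, inr y => adj x y
  | _, _ => false
  end.

Lemma union_adj_sym : symmetric union_adj.
Proof. by case=> x [] y //=; rewrite adj_sym. Qed.

Lemma union_adj_irr : irreflexive union_adj.
Proof. by case=> x /=; rewrite adj_irr. Qed.

Definition union : sgraph :=
  @SGraph (vert F1 + vert F2)%type union_adj union_adj_sym union_adj_irr.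

End DisjointUnion.

Lemma cardsU_disjoint (T : finType) (A B : {set T}) :
  [disjoint A & B] -> #|A :|: B| = #|A| + #|B|.
Proof. by move=> disjAB; apply/eqP; rewrite leq_card_setU. Qed.

Definition arcs (F : sgraph) : {set vert F * vert F} :=
  [set p | adj p.1 p.2].

Lemma nedges_arcs (F : sgraph) : nedges F = #|arcs F|./2.
Proof. by []. Qed.

(* Reversal pairs the arcs with first endpoint of smaller rank with the others. *)
Lemma even_card_arcs (F : sgraph) : ~~ odd #|arcs F|.
Proof.
pose rank_lt (p : vert F * vert F) := enum_rank p.1 < enum_rank p.2.
pose rev (p : vert F * vert F) := (p.2, p.1).
have revK : involutive rev by case.
set A := [set p in arcs F | rank_lt p].
have arcsE : arcs F = A :|: rev @: A.
  apply/setP=> -[x y]; rewrite (can_imset_pre _ revK) !inE /rank_lt /= [adj y x]adj_sym.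
  case: (boolP (adj x y)) => //= adj_xy; case: ltngtP => // /val_inj/enum_rank_inj eq_xy.
  by move: adj_xy; rewrite eq_xy adj_irr.
have disjA : [disjoint A & rev @: A].
  rewrite (can_imset_pre _ revK) -setI_eq0; apply/eqP/setP=> -[x y].
  by rewrite !inE /rank_lt /=; case: ltngtP; rewrite !andbF.
rewrite arcsE cardsU_disjoint // card_imset ?addnn ?odd_double //.
exact: inv_inj.
Qed.

Lemma nedges_union (F1 F2 : sgraph) :
  nedges (union F1 F2) = nedges F1 + nedges F2.
Proof.
pose inl2 (p : vert F1 * vert F1) : vert (union F1 F2) * vert (union F1 F2) :=
  (inl p.1, inl p.2).
pose inr2 (p : vert F2 * vert F2) : vert (union F1 F2) * vert (union F1 F2) :=
  (inr p.1, inr p.2).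
have inl2_inj : injective inl2 by move=> [? ?] [? ?] [-> ->].
have inr2_inj : injective inr2 by move=> [? ?] [? ?] [-> ->].
have arcsE : arcs (union F1 F2) = inl2 @: arcs F1 :|: inr2 @: arcs F2.
  apply/setP=> -[[x|x] [y|y]]; rewrite inE in_setU.
  - rewrite -[(_, _)]/(inl2 (x, y)) mem_imset // inE.
    by case: imsetP => [[] //|]; rewrite orbF.
  - by do 2!case: imsetP => [[] //|].
  - by do 2!case: imsetP => [[] //|].
  - rewrite -[(_, _)]/(inr2 (x, y)) mem_imset // inE.
    by case: imsetP => [[] //|].
have disj : [disjoint inl2 @: arcs F1 & inr2 @: arcs F2].
  by apply/pred0P=> p /=; apply/andP=> -[/imsetP [? _ ->] /imsetP [? _]].
rewrite !nedges_arcs arcsE cardsU_disjoint // !card_imset // halfD.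
by rewrite (negbTE (even_card_arcs F1)).
Qed.

Lemma has_copy_inj (F F' G : sgraph) (h : vert F -> vert F')
    (col : rel (vert F)) (col' : rel (vert F')) :
    injective h ->
    (forall x y, adj x y && col x y -> adj (h x) (h y) && col' (h x) (h y)) ->
  has_copy G col -> has_copy G col'.
Proof.
move=> h_inj h_hom [f [f_inj f_hom]]; exists (h \o f); split.
  exact: inj_comp.
by move=> x y /f_hom /h_hom.
Qed.

Lemma has_copy_matching_union (F1 F2 : sgraph) (c : rel (vert (union F1 F2))) s t :
    has_copy (matching s) (fun x y => c (inl x) (inl y)) ->
    has_copy (matching t) (fun x y => c (inr x) (inr y)) ->
  has_copy (matching (s + t)) c.
Proof.
move=> [f1 [f1_inj f1_hom]] [f2 [f2_inj f2_hom]].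
pose f (p : 'I_(s + t) * bool) : vert (union F1 F2) :=
  match split p.1 with inl i => inl (f1 (i, p.2)) | inr i => inr (f2 (i, p.2)) end.
exists f; split.
  move=> [i a] [j b]; rewrite /f /=.
  case: splitP => i' ei; case: splitP => j' ej //.
  - by case=> /f1_inj [eq_ij ->]; congr pair; apply: ord_inj; rewrite ei ej eq_ij.
  - by case=> /f2_inj [eq_ij ->]; congr pair; apply: ord_inj; rewrite ei ej eq_ij.
move=> [i a] [j b] /andP [/= /eqP <- neq_ab]; rewrite /f /=.
case: (split i) => k.
  by apply: (f1_hom (k, a) (k, b)); rewrite /= /matching_adj /= eqxx.
by apply: (f2_hom (k, a) (k, b)); rewrite /= /matching_adj /= eqxx.
Qed.

Lemma arrows_union (F1 F2 G : sgraph) s t :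
    arrows F1 (matching s) G -> arrows F2 (matching t) G ->
  arrows (union F1 F2) (matching (s + t)) G.
Proof.
move=> arr1 arr2 c c_sym.
have [red1|blue1] := arr1 _ (fun x y => c_sym (inl x) (inl y)); last first.
  by right; apply: (has_copy_inj (F' := union F1 F2) (h := inl)) blue1 => // x y [->].
have [red2|blue2] := arr2 _ (fun x y => c_sym (inr x) (inr y)); last first.
  by right; apply: (has_copy_inj (F' := union F1 F2) (h := inr)) blue2 => // x y [->].
by left; apply: has_copy_matching_union.
Qed.

Lemma arrows_matching0 (F G : sgraph) : arrows F (matching 0) G.
Proof.
move=> c _; left; exists (fun p : 'I_0 * bool => False_rect _ (notF (ltn_ord p.1))).
by split=> [[[]] | [[]]].
Qed.

Lemma arrows_K2 (G : sgraph) : arrows G (matching 1) G.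
Proof.
move=> c c_sym.
case: (Classical_Prop.classic (exists x y, adj x y && c x y)) => [|no_red]; last first.
  right; exists id; split=> // x y adj_xy; rewrite adj_xy /=.
  by apply/negP=> c_xy; apply: no_red; exists x, y; rewrite adj_xy.
move=> [x [y /andP [adj_xy c_xy]]]; left.
exists (fun p : 'I_1 * bool => if p.2 then y else x); split.
  move=> [i []] [j []] //= eq_xy;
    by [rewrite !ord1 | move: adj_xy; rewrite eq_xy adj_irr].
move=> [i []] [j []] /andP [_ //] _ /=;
  by rewrite ?[adj y x]adj_sym ?[c y x]c_sym adj_xy.
Qed.

Lemma arrows_matching_exists (G : sgraph) s : exists F, arrows F (matching s) G.
Proof.
elim: s => [|s [F arrF]]; first by exists G; apply: arrows_matching0.
by exists (union F G); rewrite -addn1; apply: arrows_union => //; apply: arrows_K2.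
Qed.

Lemma size_ramsey_cand_matching (G : sgraph) s :
  exists k, size_ramsey_cand (matching s) G k.
Proof. by have [F arrF] := arrows_matching_exists G s; exists (nedges F), F. Qed.

Theorem proposition2p2 (G : sgraph) (s t : nat) :
  nonempty_graph G -> 1 <= s -> 1 <= t ->
  size_ramsey (matching (s + t)) G <=
    size_ramsey (matching s) G + size_ramsey (matching t) G.
Proof.
move=> _ _ _.
have [[F1 [<- arr1]] _] := size_ramseyP (size_ramsey_cand_matching G s).
have [[F2 [<- arr2]] _] := size_ramseyP (size_ramsey_cand_matching G t).
have [_ minimal] := size_ramseyP (size_ramsey_cand_matching G (s + t)).
apply: minimal; exists (union F1 F2); split.
  exact: nedges_union.
exact: arrows_union.
Qed.
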